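(* Let $M$ be a manifold with a Randers metric $Z$ having Zermelo data $(h,W)$, and let $f:U\subset M\to\mathbb{R}$ be a smooth function without critical points on the open set $U$. Let $\nabla f$ and $\widetilde{\nabla} f$ denote the gradients of $f$ with respect to $Z$ and $h$ respectively, and write $\|v\|=\sqrt{h(v,v)}$. Then on $U$: (a) $\dfrac{\|\widetilde{\nabla} f\|}{Z(\nabla f)}\big(\nabla f-Z(\nabla f)W\big)=\widetilde{\nabla} f$; (b) $Z(\nabla f)=\|\widetilde{\nabla} f\|+df(W)$.
   Context: Given a Riemannian metric $h$ on $M$ and a smooth vector field $W$ with $h(W,W)<1$, the Randers metric $Z:TM\to[0,\infty)$ with Zermelo data $(h,W)$ is defined for $v\neq0$ as the solution $Z(v)>0$ of $h\big(\frac{v}{Z(v)}-W,\frac{v}{Z(v)}-W\big)=1$ (and $Z(0)=0$); it is a Finsler metric. For a Finsler metric $F$ with fundamental tensor $g_v(u,w)=\frac12\frac{\partial^2}{\partial t\partial s}F^2(v+tu+sw)|_{t=s=0}$, the gradient $\nabla f$ of $f$ at a non-critical point is the unique vector with $df(\cdot)=g_{\nabla f}(\nabla f,\cdot)$; for a Riemannian metric this is the usual gradient. *)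

From HB Require Import structures.
From mathcomp Require Import all_boot all_order all_algebra.
From mathcomp Require Import all_classical all_reals all_analysis.
Set Implicit Arguments. Unset Strict Implicit. Unset Printing Implicit Defensive.
Import Order.TTheory GRing.Theory Num.Theory.
Local Open Scope ring_scope.

(* Pointwise model: the tangent space T_pM is 'rV[R]_n; the Riemannian
   metric h at p is given by a Gram matrix H. *)
Definition hdot (R : realType) (n : nat) (H : 'M[R]_n) (u w : 'rV[R]_n) : R :=
  (u *m H *m w^T) 0 0.

Definition hnorm (R : realType) (n : nat) (H : 'M[R]_n) (v : 'rV[R]_n) : R :=
  Num.sqrt (hdot H v v).

Definition riemannian (R : realType) (n : nat) (H : 'M[R]_n) : Prop :=
  H^T = H /\ forall v : 'rV[R]_n, v != 0 -> 0 < hdot H v v.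

Definition randersZ (R : realType) (n : nat) (H : 'M[R]_n) (W : 'rV[R]_n)
    (v : 'rV[R]_n) : R :=
  if v == 0 then 0
  else xget 0 [set z : R | 0 < z /\ hdot H (z^-1 *: v - W) (z^-1 *: v - W) = 1].

Definition fund_tensor (R : realType) (n : nat) (F : 'rV[R]_n -> R)
    (v u w : 'rV[R]_n) : R :=
  2^-1 * derive1 (fun t : R =>
           derive1 (fun s : R => (F (v + t *: u + s *: w)) ^+ 2) 0) 0.

Definition dfun (R : realType) (n : nat) (c : 'cV[R]_n) (u : 'rV[R]_n) : R :=
  (u *m c) 0 0.

Definition is_finsler_gradient (R : realType) (n : nat) (F : 'rV[R]_n -> R)
    (c : 'cV[R]_n) (G : 'rV[R]_n) : Prop :=
  forall u : 'rV[R]_n, dfun c u = fund_tensor F G G u.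

Definition is_riem_gradient (R : realType) (n : nat) (H : 'M[R]_n)
    (c : 'cV[R]_n) (Gt : 'rV[R]_n) : Prop :=
  forall u : 'rV[R]_n, dfun c u = hdot H Gt u.

(* With l = 1 - h(W,W), the defining equation of the Randers norm Z(v) is the
   quadratic l Z^2 + 2 h(v,W) Z = h(v,v), whose positive root is
   (sqrt (h(v,W)^2 + l h(v,v)) - h(v,W)) / l.  As Z is positively homogeneous,
   g_v(v,u) = 1/2 d/ds Z(v + s u)^2 at s = 0, and differentiating the quadratic
   gives g_G(G,u) = Z/S h(G - Z W, u) with S = Z + h(G - Z W, W) > 0.  Hence the
   Riemannian gradient is (Z/S)(G - Z W).  Since h(G - Z W, G - Z W) = Z^2 by the
   definition of Z, its norm is Z^2/S, and both identities follow. *)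

From mathcomp Require Import all_boot all_order all_algebra.
From mathcomp Require Import all_classical all_reals all_analysis.
From mathcomp Require Import ring lra.
Import Order.TTheory GRing.Theory Num.Theory.
Local Open Scope classical_set_scope.
Local Open Scope ring_scope.

Section Hdot.
Context {R : realType} {n : nat} (H : 'M[R]_n).

Lemma hdotDl u v w : hdot H (u + v) w = hdot H u w + hdot H v w.
Proof. by rewrite /hdot !mulmxDl mxE. Qed.

Lemma hdotZl k u w : hdot H (k *: u) w = k * hdot H u w.
Proof. by rewrite /hdot -!scalemxAl mxE. Qed.

Lemma hdotDr u v w : hdot H u (v + w) = hdot H u v + hdot H u w.
Proof. by rewrite /hdot linearD /= mulmxDr mxE. Qed.

Lemma hdotZr k u w : hdot H u (k *: w) = k * hdot H u w.
Proof. by rewrite /hdot linearZ /= -scalemxAr mxE. Qed.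

Lemma hdotNl u w : hdot H (- u) w = - hdot H u w.
Proof. by rewrite -scaleN1r hdotZl mulN1r. Qed.

Lemma hdotNr u w : hdot H u (- w) = - hdot H u w.
Proof. by rewrite -scaleN1r hdotZr mulN1r. Qed.

Lemma hdot0l w : hdot H 0 w = 0.
Proof. by rewrite -(scale0r 0) hdotZl mul0r. Qed.

Lemma hdotC : H^T = H -> forall u w, hdot H u w = hdot H w u.
Proof.
move=> HT u w; rewrite /hdot -[in LHS](trmxK (u *m H *m w^T)) [LHS]mxE.
by rewrite !trmx_mul trmxK HT mulmxA.
Qed.

Lemma hdotI : riemannian H -> forall x y, hdot H x =1 hdot H y -> x = y.
Proof.
move=> [_ Hpos] x y hxy; apply/eqP; rewrite -subr_eq0; apply: contraT => xy0.
by have := Hpos _ xy0; rewrite hdotDl hdotNl hxy subrr ltxx.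
Qed.

Lemma hnormZ k v : 0 <= k -> hnorm H (k *: v) = k * hnorm H v.
Proof.
move=> k0; rewrite /hnorm hdotZl hdotZr mulrA -expr2 sqrtrM ?sqr_ge0 //.
by rewrite sqrtr_sqr ger0_norm.
Qed.

Lemma is_derive_hdotl_line v u w :
  is_derive (0 : R) 1 (fun s => hdot H (v + s *: u) w) (hdot H u w).
Proof.
have -> : (fun s => hdot H (v + s *: u) w) = (fun s => hdot H v w + s * hdot H u w).
  by apply: funext => s; rewrite hdotDl hdotZl.
by apply: is_derive_eq; rewrite !(scaler0, add0r, mul1r); exact: mulr1.
Qed.

Lemma is_derive_hdot_line_diag v u : H^T = H ->
  is_derive (0 : R) 1 (fun s => hdot H (v + s *: u) (v + s *: u)) (2 * hdot H v u).
Proof.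
move=> HT.
have -> : (fun s => hdot H (v + s *: u) (v + s *: u)) =
    (fun s => hdot H v v + s * (2 * hdot H v u) + s ^+ 2 * hdot H u u).
  apply: funext => s; rewrite !(hdotDl, hdotDr, hdotZl, hdotZr) (hdotC HT u v); ring.
by apply: is_derive_eq; rewrite !(scaler0, scale0r, add0r, addr0, mul1r); exact: mulr1.
Qed.

Lemma hdot_ge0 v : riemannian H -> 0 <= hdot H v v.
Proof.
move=> [_ Hpos]; have [->|v0] := eqVneq v 0; first by rewrite hdot0l.
exact/ltW/Hpos.
Qed.

End Hdot.

Lemma pos_root_quadratic_uniq {R : realFieldType} (l a b z1 z2 : R) :
  0 <= l -> 0 < b -> 0 < z1 -> 0 < z2 ->
  l * z1 ^+ 2 + 2 * a * z1 = b -> l * z2 ^+ 2 + 2 * a * z2 = b -> z1 = z2.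
Proof.
move=> l0 b0 z10 z20 e1 e2.
have lin1 : 0 < l * z1 + 2 * a.
  by rewrite -(pmulr_rgt0 _ z10) -[X in 0 < X](_ : b = _) // -e1; ring.
have : (z1 - z2) * (l * (z1 + z2) + 2 * a) = 0.
  by rewrite -[RHS](subrr b) -{1}e1 -e2; ring.
have lz2 : 0 <= l * z2 by rewrite mulr_ge0 // ltW.
have /gt_eqF lin : 0 < l * (z1 + z2) + 2 * a by rewrite mulrDr; lra.
by move/eqP; rewrite mulf_eq0 lin orbF subr_eq0 => /eqP.
Qed.

Definition zermelo_root {R : rcfType} (l a b : R) : R :=
  (Num.sqrt (a ^+ 2 + l * b) - a) / l.

Section ZermeloRoot.
Context {R : rcfType}.
Implicit Types l a b k : R.

Lemma zermelo_root0 l : zermelo_root l 0 0 = 0.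
Proof. by rewrite /zermelo_root expr0n mulr0 addr0 sqrtr0 subr0 mul0r. Qed.

Lemma sqrt_zermelo_root l a b :
  l != 0 -> Num.sqrt (a ^+ 2 + l * b) = l * zermelo_root l a b + a.
Proof. by move=> l0; rewrite /zermelo_root mulrCA mulfV // mulr1 subrK. Qed.

Lemma zermelo_root_eq l a b : l != 0 -> 0 <= a ^+ 2 + l * b ->
  l * zermelo_root l a b ^+ 2 + 2 * a * zermelo_root l a b = b.
Proof.
move=> l0 q0; apply: (mulfI l0).
have -> : l * (l * zermelo_root l a b ^+ 2 + 2 * a * zermelo_root l a b) =
          (l * zermelo_root l a b + a) ^+ 2 - a ^+ 2 by ring.
by rewrite -sqrt_zermelo_root // sqr_sqrtr // addrC addKr.
Qed.

Lemma zermelo_root_gt0 l a b : 0 < l -> 0 < b -> 0 < zermelo_root l a b.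
Proof.
move=> l0 b0; rewrite divr_gt0 // subr_gt0 (le_lt_trans (ler_norm a)) //.
by rewrite -sqrtr_sqr ltr_sqrt ?ltrDl ?mulr_gt0 // ltr_wpDl ?sqr_ge0 ?mulr_gt0.
Qed.

Lemma zermelo_rootZ l a b k : 0 <= k ->
  zermelo_root l (k * a) (k ^+ 2 * b) = k * zermelo_root l a b.
Proof.
move=> k0; rewrite /zermelo_root mulrCA exprMn -mulrDr sqrtrM ?sqr_ge0 //.
by rewrite sqrtr_sqr ger0_norm // -mulrBr mulrA.
Qed.

End ZermeloRoot.

Lemma is_derive_zermelo_root {R : realType} {l : R} {a b : R -> R} {x da db : R} :
  is_derive x 1 a da -> is_derive x 1 b db ->
  l != 0 -> 0 < a x ^+ 2 + l * b x ->
  is_derive x 1 (fun s => zermelo_root l (a s) (b s))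
    ((db - 2 * da * zermelo_root l (a x) (b x)) /
     (2 * Num.sqrt (a x ^+ 2 + l * b x))).
Proof.
move=> Da Db l0 q0.
pose q s := a s ^+ 2 + l * b s.
have Dq : is_derive x 1 q (2 * a x * da + l * db).
  by apply: is_derive_eq; rewrite -![_ *: _]/(_ * _); ring.
have Dsqrt := @is_derive1_comp _ _ q _ _ _ (is_derive1_sqrt q0) Dq.
have -> : (fun s => zermelo_root l (a s) (b s)) = l^-1 \*: (Num.sqrt \o q - a).
  by apply: funext => s; rewrite /zermelo_root /= mulrC.
apply: is_derive_eq; rewrite /zermelo_root; set S := Num.sqrt _.
have S0 : S != 0 by rewrite gt_eqF // sqrtr_gt0.
by rewrite -[_ *: _]/(_ * _); field; rewrite S0 l0.
Qed.

Section FundamentalTensor.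
Context {R : realType} {n : nat} (F : 'rV[R]_n -> R).

Lemma fund_tensor00 u : fund_tensor F 0 0 u = 0.
Proof.
rewrite /fund_tensor.
under eq_fun do under eq_fun do rewrite scaler0 !add0r.
by rewrite derive1_cst mulr0.
Qed.

Lemma fund_tensor_diag v u D :
  (forall k w, 0 < k -> F (k *: w) = k * F w) ->
  is_derive (0 : R) 1 (fun s => F (v + s *: u) ^+ 2) D ->
  fund_tensor F v v u = D / 2.
Proof.
move=> Fhom DF.
have inner t : -1 < t -> derive1 (fun s => F (v + t *: v + s *: u) ^+ 2) 0 = (1 + t) * D.
  move=> t1; have k0 : 0 < 1 + t by lra.
  have -> : (fun s => F (v + t *: v + s *: u) ^+ 2) =
            (fun s => (1 + t) ^+ 2 * F (v + (s / (1 + t)) *: u) ^+ 2).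
    apply: funext => s; rewrite -exprMn -Fhom // scalerDr scalerA mulrCA.
    by rewrite mulfV ?gt_eqF // mulr1 scalerDl scale1r.
  have Dscale : is_derive (0 : R) 1 (fun s => s / (1 + t)) (1 + t)^-1.
    by apply: is_derive_eq; rewrite scaler0 add0r; exact: mulr1.
  have := @is_derive1_comp _ (fun s => F (v + s *: u) ^+ 2) _ 0 _ _ _ Dscale.
  rewrite /= mul0r => /(_ D DF) Dcomp.
  rewrite derive1E; apply: derive_val; apply: is_derive_eq.
  by rewrite -[_ *: _]/(_ * _); field; rewrite gt_eqF.
have inner_near : \forall t \near (0 : R^o),
    derive1 (fun s => F (v + t *: v + s *: u) ^+ 2) 0 = (1 + t) * D.
  exists 1 => //= t; rewrite /ball /= sub0r normrN => /ltr_normlP [t1 _].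
  by apply: inner; rewrite ltrNl.
rewrite /fund_tensor derive1E (near_eq_derive _ inner_near) mulrC.
congr (_ * _); apply: derive_val; apply: is_derive_eq.
by rewrite scaler0 !add0r; exact: mulr1.
Qed.

End FundamentalTensor.

Section Randers.
Context {R : realType} {n : nat} {H : 'M[R]_n} {W : 'rV[R]_n}.
Hypotheses (H_riem : riemannian H) (W_lt1 : hdot H W W < 1).

Local Notation Z := (randersZ H W).
Local Notation l := (1 - hdot H W W).

Let HT : H^T = H. Proof. by case: H_riem. Qed.
Let l_gt0 : 0 < l. Proof. by rewrite subr_gt0. Qed.

Lemma randersZE v : Z v = zermelo_root l (hdot H v W) (hdot H v v).
Proof.
rewrite /randersZ; case: eqP => [->|/eqP v0]; first by rewrite !hdot0l zermelo_root0.
set P := [set z | _]; set a := hdot H v W; set b := hdot H v v.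
have b_gt0 : 0 < b by case: H_riem => _; apply.
have indicatrixE z : 0 < z ->
    (hdot H (z^-1 *: v - W) (z^-1 *: v - W) == 1) = (l * z ^+ 2 + 2 * a * z == b).
  move=> z_gt0; have z0 : z != 0 by rewrite gt_eqF.
  rewrite !(hdotDl, hdotDr, hdotZl, hdotZr, hdotNl, hdotNr) (hdotC H HT W v) -/a -/b.
  have -> : z^-1 * (z^-1 * b) - z^-1 * a - (z^-1 * a - hdot H W W) =
            1 + (b - (l * z ^+ 2 + 2 * a * z)) / z ^+ 2 by field.
  rewrite -subr_eq0 addrC addKr mulf_eq0 invr_eq0 expf_eq0 (negbTE z0) andbF.
  by rewrite orbF subr_eq0 eq_sym.
set z0 := zermelo_root l a b.
have z0_gt0 : 0 < z0 by exact: zermelo_root_gt0.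
have z0_eq : l * z0 ^+ 2 + 2 * a * z0 = b.
  by apply: zermelo_root_eq; rewrite ?gt_eqF // addr_ge0 ?sqr_ge0 // mulr_ge0 // ltW.
have z0P : 0 < z0 /\ hdot H (z0^-1 *: v - W) (z0^-1 *: v - W) = 1.
  by split => //; apply/eqP; rewrite indicatrixE // z0_eq.
have [z_gt0 /eqP] := xgetPex 0 (ex_intro P z0 z0P).
rewrite indicatrixE // => /eqP z_eq.
exact: pos_root_quadratic_uniq (ltW l_gt0) b_gt0 z_gt0 z0_gt0 z_eq z0_eq.
Qed.

Lemma randersZ_gt0 v : v != 0 -> 0 < Z v.
Proof.
move=> v0; rewrite randersZE zermelo_root_gt0 //.
by case: H_riem => _; apply.
Qed.

Lemma randersZZ k v : 0 < k -> Z (k *: v) = k * Z v.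
Proof.
move=> k_gt0; rewrite !randersZE !(hdotZl, hdotZr) mulrA -expr2.
by rewrite zermelo_rootZ // ltW.
Qed.

Lemma hdot_sub_randersZ v : hdot H (v - Z v *: W) (v - Z v *: W) = Z v ^+ 2.
Proof.
have root_eq : l * Z v ^+ 2 + 2 * hdot H v W * Z v = hdot H v v.
  rewrite randersZE zermelo_root_eq ?gt_eqF //.
  by rewrite addr_ge0 ?sqr_ge0 // mulr_ge0 ?hdot_ge0 // ltW.
rewrite !(hdotDl, hdotDr, hdotZl, hdotZr, hdotNl, hdotNr) (hdotC H HT W v).
by rewrite -[in hdot H v v]root_eq; ring.
Qed.

Lemma randersZ_add_hdotE v :
  Z v + hdot H (v - Z v *: W) W = Num.sqrt (hdot H v W ^+ 2 + l * hdot H v v).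
Proof.
by rewrite randersZE sqrt_zermelo_root ?gt_eqF // hdotDl hdotNl hdotZl; ring.
Qed.

Lemma randersZ_add_hdot_gt0 v : v != 0 -> 0 < Z v + hdot H (v - Z v *: W) W.
Proof.
move=> v0; have b_gt0 : 0 < hdot H v v by case: H_riem => _; apply.
by rewrite randersZ_add_hdotE sqrtr_gt0 ltr_wpDl ?sqr_ge0 ?mulr_gt0.
Qed.

Lemma is_derive_randersZ_sqr v u : v != 0 ->
  is_derive (0 : R) 1 (fun s => Z (v + s *: u) ^+ 2)
    (2 * (Z v / (Z v + hdot H (v - Z v *: W) W)) * hdot H (v - Z v *: W) u).
Proof.
move=> v0; have S_gt0 := randersZ_add_hdot_gt0 _ v0.
have q_gt0 : 0 < hdot H (v + 0 *: u) W ^+ 2 + l * hdot H (v + 0 *: u) (v + 0 *: u).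
  by rewrite scale0r addr0 -sqrtr_gt0 -randersZ_add_hdotE.
have := is_derive_zermelo_root (is_derive_hdotl_line H v u W)
  (is_derive_hdot_line_diag H v u HT) (lt0r_neq0 l_gt0) q_gt0.
rewrite scale0r addr0 -!randersZE -randersZ_add_hdotE => Dz.
under eq_fun do rewrite randersZE.
apply: is_derive_eq; rewrite scale0r addr0 -randersZE.
set S := Z v + _ in S_gt0 *.
rewrite hdotDl hdotNl hdotZl (hdotC H HT W u) -![_ *: _]/(_ * _).
by field; rewrite lt0r_neq0.
Qed.

Lemma fund_tensor_randers v u : v != 0 ->
  fund_tensor Z v v u =
  Z v / (Z v + hdot H (v - Z v *: W) W) * hdot H (v - Z v *: W) u.
Proof.
move=> v0; rewrite (fund_tensor_diag _ _ _ _ randersZZ (is_derive_randersZ_sqr v u v0)).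
by rewrite [LHS]mulrC !mulrA mulVf ?pnatr_eq0 // mul1r.
Qed.

End Randers.

Theorem lemma3p1 (R : realType) (n : nat) (H : 'M[R]_n) (W : 'rV[R]_n)
    (c : 'cV[R]_n) (G Gt : 'rV[R]_n) :
  riemannian H ->
  hdot H W W < 1 ->
  c != 0 ->
  is_finsler_gradient (randersZ H W) c G ->
  is_riem_gradient H c Gt ->
  (hnorm H Gt / randersZ H W G) *: (G - randersZ H W G *: W) = Gt /\
  randersZ H W G = hnorm H Gt + dfun c W.
Proof.
move=> H_riem W_lt1 _ DG DGt.
have [G0|G0] := eqVneq G 0.
  subst G; have Gt0 : Gt = 0.
    by apply: (hdotI _ H_riem) => u; rewrite -DGt DG fund_tensor00 hdot0l.
  by rewrite DGt Gt0 /randersZ eqxx /hnorm !hdot0l sqrtr0 mul0r scale0r addr0.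
set Z := randersZ H W G; set V := G - Z *: W; set S := Z + hdot H V W.
have Z_gt0 : 0 < Z by exact: randersZ_gt0.
have S_gt0 : 0 < S by exact: randersZ_add_hdot_gt0.
have eGt : Gt = (Z / S) *: V.
  by apply: (hdotI _ H_riem) => u; rewrite -DGt DG fund_tensor_randers // hdotZl.
have nGt : hnorm H Gt = Z / S * Z.
  rewrite eGt hnormZ ?divr_ge0 ?ltW // /hnorm hdot_sub_randersZ //.
  by rewrite sqrtr_sqr gtr0_norm.
split; first by rewrite nGt eGt mulfK ?lt0r_neq0.
by rewrite DGt nGt eGt hdotZl -mulrDr -/S divfK ?lt0r_neq0.
Qed.
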